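(* $(\widetilde{W}_{\tilde v},\prec_{\tilde o^*})$ does not admit a regular nice labeling. Consequently, Thiagarajan's conjecture (a prime event structure is isomorphic to the event structure of a finite 1-safe Petri net if and only if it is regular; equivalently, an event structure is regular if and only if it is a regular trace event structure) is false.
   Context: Let $\mathbf{X}$ be Wise's complete square complex (from Wise, ''Complete square complexes''): a $VH$-complex with a single vertex, three vertical edges colored $a,b,c$, two horizontal edges colored $x,y$, and six squares, with horizontal edges oriented left to right and vertical edges bottom to top; its universal cover contains a directed plane whose tiling by (preimages of) these squares is not doubly periodic, and in the quarter-plane spanned by the rays colored $y$ and $c$ from a vertex every positive word in $x,y$ of length $n$ appears as the label of a horizontal path of length $n$ starting at one of the first $2^n$ vertices of the vertical $c$-ray, all these words being distinct. Let $W$ be obtained from the first barycentric subdivision of $\mathbf{X}$ (forgetting colors) by attaching to each edge midpoint of color $\alpha$ a path (tip) of length $r(\alpha)$, for a fixed bijection $r:\{a,b,c,x,y\}\to\{1,\dots,5\}$, with edges oriented as in the subdivision (left to right, bottom to top) and tip edges oriented away from their roots (orientation $o^*$). Let $\widetilde{W}$ be the universal cover of $W$ with induced orientation $\tilde o^*$ and partial order $\prec_{\tilde o^*}$, and for a preimage $\tilde v$ of the original vertex of $\mathbf{X}$ let $\widetilde{W}_{\tilde v}$ be the principal filter of $\tilde v$; $(\widetilde{W}_{\tilde v},\prec_{\tilde o^*})$ is the domain of a regular event structure (finite degree and finitely many isomorphism types of futures of configurations). A nice labeling is a labeling of events (equivalently, of the directed edges of the domain, with opposite edges of every square equally labeled)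 such that co-initial events (edges leaving the same vertex) get different labels; it is regular if it uses a finite alphabet and the labeled event structure has finitely many isomorphism types of labeled futures. Every regular trace labeling is a regular nice labeling. *)

From Stdlib Require Import List Relations.
From mathcomp Require Import all_boot.
Set Implicit Arguments. Unset Strict Implicit. Unset Printing Implicit Defensive.

(* Edge colours: vertical a b c, horizontal x y. *)
Inductive col := ca | cb | cc | cx | cy.

(* An (oriented) square of the VH-complex X: its bottom and top edges are
   horizontal (oriented left to right), its left and right edges are
   vertical (oriented bottom to top); its boundary reads
   bottom . right = left . top. *)
Record square := Sq { sbot : col; sleft : col; stop : col; sright : col }.

(* The six squares of Wise's complete square complex (up to renaming the
   colours).  Relations: xa=ay, xc=bx, xb=cy, yb=ax, yc=by,
   ya=cx. *)
Definition wise_squares : list square :=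
  [:: Sq cx ca cy ca; Sq cx cb cx cc; Sq cx cc cy cb;
      Sq cy ca cx cb; Sq cy cb cy cc; Sq cy cc cx ca].

(* The fundamental group pi_1(X) (X has a single vertex), as words in   *)
(* the oriented edges modulo free reduction and the square relators.    *)
(* Its elements are the vertices of the universal cover of X.           *)

Definition letter := (col * bool)%type.   (* (e, true) = e, (e, false) = e^-1 *)
Definition word := list letter.
Definition linv (l : letter) : letter := (l.1, ~~ l.2).

Inductive elem : word -> word -> Prop :=
| el_cancel l : elem [:: l; linv l] [::]
| el_sq s : List.In s wise_squares ->
    elem [:: (sbot s, true); (sright s, true)] [:: (sleft s, true); (stop s, true)].

Inductive wstep : word -> word -> Prop :=
| ws p q u v : elem u v -> wstep (p ++ u ++ q) (p ++ v ++ q).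

Definition geq : word -> word -> Prop := clos_refl_sym_trans word wstep.

(* The universal cover W~ of W, where W = (cubical) first barycentric   *)
(* subdivision of X with a tip of length r(alpha) attached to every edge *)
(* midpoint of colour alpha.  Raw vertices are indexed by group words:   *)
(*   RV g      : lift g of the original vertex of X                      *)
(*   RM g e    : midpoint of the e-coloured edge of X~ from g to g.e     *)
(*   RC g s    : centre of the lift of square s with bottom-left corner g*)
(*   RT g e k  : k-th vertex (1 <= k <= r e) of the tip at RM g e        *)

Inductive rv :=
| RV of word
| RM of word & col
| RC of word & square
| RT of word & col & nat.

Inductive rveq : rv -> rv -> Prop :=
| rveqV w w' : geq w w' -> rveq (RV w) (RV w')
| rveqM w w' e : geq w w' -> rveq (RM w e) (RM w' e)
| rveqC w w' s : geq w w' -> rveq (RC w s) (RC w' s)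
| rveqT w w' e k : geq w w' -> rveq (RT w e k) (RT w' e k).

(* Directed edges of W~ with the orientation o~star: subdivided edges left to
   right / bottom to top, tip edges away from their roots. *)
Inductive redge (r : col -> nat) : rv -> rv -> Prop :=
| e_vm w e : redge r (RV w) (RM w e)
| e_mv w e : redge r (RM w e) (RV (w ++ [:: (e, true)]))
| e_lc w s : List.In s wise_squares -> redge r (RM w (sleft s)) (RC w s)
| e_bc w s : List.In s wise_squares -> redge r (RM w (sbot s)) (RC w s)
| e_cr w s : List.In s wise_squares ->
    redge r (RC w s) (RM (w ++ [:: (sbot s, true)]) (sright s))
| e_ct w s : List.In s wise_squares ->
    redge r (RC w s) (RM (w ++ [:: (sleft s, true)]) (stop s))
| e_mt w e : 1 <= r e -> redge r (RM w e) (RT w e 1)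
| e_tt w e k : 1 <= k -> k.+1 <= r e -> redge r (RT w e k) (RT w e k.+1).

(* The (directed) squares of W~: the four quarters of each subdivided
   square, given as (source, horizontal successor, vertical successor,
   sink). *)
Inductive rsq : rv -> rv -> rv -> rv -> Prop :=
| q_bl w s : List.In s wise_squares ->
    rsq (RV w) (RM w (sbot s)) (RM w (sleft s)) (RC w s)
| q_br w s : List.In s wise_squares ->
    rsq (RM w (sbot s)) (RV (w ++ [:: (sbot s, true)])) (RC w s)
        (RM (w ++ [:: (sbot s, true)]) (sright s))
| q_tl w s : List.In s wise_squares ->
    rsq (RM w (sleft s)) (RC w s) (RV (w ++ [:: (sleft s, true)]))
        (RM (w ++ [:: (sleft s, true)]) (stop s))
| q_tr w s : List.In s wise_squares ->
    rsq (RC w s) (RM (w ++ [:: (sbot s, true)]) (sright s))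
        (RM (w ++ [:: (sleft s, true)]) (stop s))
        (RV (w ++ [:: (sbot s, true); (sright s, true)])).

Definition WV := {P : rv -> Prop | exists t, P = rveq t}.
Definition cls (t : rv) : WV := exist _ (rveq t) (ex_intro _ t erefl).
Definition mem_cls (p : WV) (t : rv) : Prop := proj1_sig p t.

Definition wedge (r : col -> nat) (p q : WV) : Prop :=
  exists t u, mem_cls p t /\ mem_cls q u /\ redge r t u.

Definition wle (r : col -> nat) : WV -> WV -> Prop :=
  clos_refl_trans WV (wedge r).

(* Principal filter of u (= domain when u = v~, = future of u otherwise). *)
Definition filter_of (r : col -> nat) (u : WV) : WV -> Prop := wle r u.

(* A labeling of events is given as a labeling of directed edges of the *)
(* domain with opposite edges of every square equally labeled.          *)

Definition nice_labeling (r : col -> nat) (v : WV) (L : Type)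
    (lab : WV -> WV -> L) : Prop :=
  (forall t u1 u2 z, rsq t u1 u2 z -> filter_of r v (cls t) ->
      lab (cls t) (cls u1) = lab (cls u2) (cls z) /\
      lab (cls t) (cls u2) = lab (cls u1) (cls z)) /\
  (forall p q1 q2, filter_of r v p -> wedge r p q1 -> wedge r p q2 ->
      q1 <> q2 -> lab p q1 <> lab p q2).

Definition labeled_future_iso (r : col -> nat) (L : Type)
    (lab : WV -> WV -> L) (u u' : WV) : Prop :=
  exists f : WV -> WV,
    (forall z, filter_of r u z -> filter_of r u' (f z)) /\
    (forall z1 z2, filter_of r u z1 -> filter_of r u z2 -> f z1 = f z2 -> z1 = z2) /\
    (forall z', filter_of r u' z' -> exists2 z, filter_of r u z & f z = z') /\
    (forall z1 z2, filter_of r u z1 -> filter_of r u z2 ->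
        (wedge r z1 z2 <-> wedge r (f z1) (f z2))) /\
    (forall z1 z2, filter_of r u z1 -> filter_of r u z2 -> wedge r z1 z2 ->
        lab (f z1) (f z2) = lab z1 z2).

Definition regular_nice_labeling (r : col -> nat) (v : WV) (L : finType)
    (lab : WV -> WV -> L) : Prop :=
  nice_labeling r v lab /\
  exists reps : list WV,
    (forall u', List.In u' reps -> filter_of r v u') /\
    (forall u, filter_of r v u ->
       exists2 u', List.In u' reps & labeled_future_iso r lab u u').

From Pilot Require Import Defs.
From Stdlib Require Import List Relations ZArith Lia.
From Stdlib Require Import Classical FunctionalExtensionality PropExtensionality.
From mathcomp Require Import all_boot zify.
Set Implicit Arguments. Unset Strict Implicit. Unset Printing Implicit Defensive.

(* The squares of X act on horizontal words as a transducer whose states are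
   the vertical colours a, b, c.  Hence, above a vertex g, the horizontal
   word of length n read after going up i edges of colour c is the i-th
   image of y^n under the transducer started in state c; this transducer is
   an odometer, so rows 0, ..., 2^n - 1 are pairwise distinct.  In a nice
   labeling opposite edges of squares carry equal labels, so every row is
   labeled like row 0.  If the labeled futures of the origins of rows i and
   k were isomorphic to the same representative, niceness would force the
   two isomorphisms to agree step by step along the rows, and since the
   length of the tip at an edge midpoint (hence the colour of the edge) is an
   order invariant, rows i and k would be equal.  So every n needs at least
   2^n representatives. *)

Inductive vcol := Va | Vb | Vc.

Definition vcol_col (s : vcol) : col := match s with Va => ca | Vb => cb | Vc => cc end.
Definition hcol (l : bool) : col := if l then cx else cy.

(* Read as a transducer: the square of X with bottom [hcol l] and left side
   [vcol_col s] has top [hcol (wise_step s l).1] and right side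
   [vcol_col (wise_step s l).2]. *)
Definition wise_step (s : vcol) (l : bool) : bool * vcol :=
  match s, l with
  | Va, true => (false, Va) | Va, false => (true, Vb)
  | Vb, true => (true, Vc) | Vb, false => (false, Vc)
  | Vc, true => (false, Vb) | Vc, false => (true, Va)
  end.

Lemma wise_step_square s l :
  List.In (Sq (hcol l) (vcol_col s) (hcol (wise_step s l).1)
              (vcol_col (wise_step s l).2)) wise_squares.
Proof. by case: s; case: l; rewrite /wise_squares /=; tauto. Qed.

Definition flips (s : vcol) : bool := if s is Vb then false else true.

Lemma wise_step_out s l : (wise_step s l).1 = l (+) flips s.
Proof. by case: s; case: l. Qed.

Fixpoint trans_out (s : vcol) (w : seq bool) : seq bool :=
  if w is l :: w' then (wise_step s l).1 :: trans_out (wise_step s l).2 w' else [::].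

Fixpoint trans_state (s : vcol) (w : seq bool) : vcol :=
  if w is l :: w' then trans_state (wise_step s l).2 w' else s.

Definition cascade (ss : seq vcol) (w : seq bool) : seq bool :=
  foldl (fun w s => trans_out s w) w ss.

Fixpoint cascade_head (ss : seq vcol) (l : bool) : bool * seq vcol :=
  if ss is s :: ss' then
    let p := cascade_head ss' (wise_step s l).1 in (p.1, (wise_step s l).2 :: p.2)
  else (l, [::]).

Lemma size_trans_out s w : size (trans_out s w) = size w.
Proof. by elim: w s => [|l w IH] s //=; rewrite IH. Qed.

Lemma nth_trans_out s w j : j < size w ->
  nth false (trans_out s w) j = (wise_step (trans_state s (take j w)) (nth false w j)).1 /\
  trans_state s (take j.+1 w) = (wise_step (trans_state s (take j w)) (nth false w j)).2.
Proof. by elim: w s j => [|l w IH] s [|j] //= h; [rewrite take0 | exact: IH]. Qed.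

Lemma cascade_cons ss l w :
  cascade ss (l :: w) = (cascade_head ss l).1 :: cascade (cascade_head ss l).2 w.
Proof. by elim: ss l w => [|s ss IH] l w //=; rewrite IH. Qed.

Lemma cascade_cat ss ts w : cascade (ss ++ ts) w = cascade ts (cascade ss w).
Proof. by rewrite /cascade foldl_cat. Qed.

Lemma cascade_head_out ss l : (cascade_head ss l).1 = l (+) odd (count flips ss).
Proof.
elim: ss l => [|s ss IH] l /=; first by rewrite addbF.
by rewrite IH wise_step_out oddD; case: (flips s); case: l; case: (odd _).
Qed.

Lemma odd_flips_cascade_head ss l :
  odd (count flips ((cascade_head ss l).2 ++ (cascade_head ss (~~ l)).2))
  = odd (count flips ss).
Proof.
rewrite count_cat.
elim: ss l => [|s ss IH] l //=.
have -> : (wise_step s (~~ l)).1 = ~~ (wise_step s l).1 by case: s; case: l.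
have Hs : odd (flips (wise_step s l).2 + flips (wise_step s (~~ l)).2) = flips s
  by case: s; case: l.
by rewrite addnACA oddD Hs IH oddD oddb.
Qed.

(* A cascade with an odd number of flipping states acts like an odometer:
   it flips the first letter, and applied twice it fixes the first letter
   and acts on the rest as a cascade with the same property. *)
Lemma cascade_twice ss l w : odd (count flips ss) ->
  cascade ss (cascade ss (l :: w))
  = l :: cascade ((cascade_head ss l).2 ++ (cascade_head ss (~~ l)).2) w.
Proof.
move=> odd_ss; rewrite !cascade_cons cascade_head_out odd_ss cascade_cat /=.
by rewrite cascade_head_out odd_ss !addbT negbK.
Qed.

Lemma iter_cascade_double ss l w m : odd (count flips ss) ->
  iter m.*2 (cascade ss) (l :: w)
  = l :: iter m (cascade ((cascade_head ss l).2 ++ (cascade_head ss (~~ l)).2)) w.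
Proof. by move=> odd_ss; elim: m => [|m IH] //; rewrite doubleS /= IH cascade_twice. Qed.

Lemma iter_cascade_neq n ss w k : odd (count flips ss) -> size w = n ->
  0 < k < 2 ^ n -> iter k (cascade ss) w != w.
Proof.
elim: n ss w k => [|n IH] ss w k odd_ss; first by rewrite expn0; lia.
case: w => [//|l w] [size_w] /andP[k_gt0 k_lt].
rewrite -(odd_double_half k); case odd_k: (odd k) => /=.
  rewrite iter_cascade_double // cascade_cons cascade_head_out odd_ss addbT.
  by apply/negP => /eqP [] /eqP; case: l.
rewrite add0n iter_cascade_double //; apply/negP => /eqP [] /eqP; apply/negP.
apply: IH => //; first by rewrite odd_flips_cascade_head.
move: k_gt0 k_lt; rewrite -{1 2}(odd_double_half k) odd_k expnS; lia.
Qed.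

Definition fwd (e : col) : letter := (e, true).

Lemma geq_refl w : Defs.geq w w. Proof. exact: rst_refl. Qed.
Lemma geq_sym w w' : Defs.geq w w' -> Defs.geq w' w. Proof. exact: rst_sym. Qed.
Lemma geq_trans w1 w2 w3 : Defs.geq w1 w2 -> Defs.geq w2 w3 -> Defs.geq w1 w3.
Proof. exact: rst_trans. Qed.

Lemma geq_catr w w' s : Defs.geq w w' -> Defs.geq (w ++ s) (w' ++ s).
Proof.
elim=> [x y [p q u v e]|x|x y _ IH|x y z _ IH1 _ IH2].
- by apply: rst_step; rewrite -!catA; apply: ws.
- exact: rst_refl.
- exact: rst_sym.
- exact: rst_trans IH1 IH2.
Qed.

Lemma geq_square w s : List.In s wise_squares ->
  Defs.geq (w ++ [:: fwd (sbot s); fwd (sright s)]) (w ++ [:: fwd (sleft s); fwd (stop s)]).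
Proof. by move=> s_in; apply: rst_step; have := ws w [::] (el_sq s_in); rewrite !cats0. Qed.

Lemma rveq_refl t : rveq t t.
Proof. by case: t => *; constructor; apply: geq_refl. Qed.
Lemma rveq_sym t u : rveq t u -> rveq u t.
Proof. by case=> *; constructor; apply: geq_sym. Qed.
Lemma rveq_trans t u v : rveq t u -> rveq u v -> rveq t v.
Proof.
by case=> [w w' h|w w' e h|w w' s h|w w' e k h] H; inversion H; subst;
  constructor; apply: geq_trans h _.
Qed.

Lemma rveq_ext t u : rveq t u -> rveq t = rveq u.
Proof.
move=> tu; apply: functional_extensionality => x; apply: propositional_extensionality.
by split; [apply: rveq_trans (rveq_sym tu) | apply: rveq_trans tu].
Qed.

Lemma WV_eq (p q : WV) : proj1_sig p = proj1_sig q -> p = q.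
Proof. by case: p q => P hP [Q hQ] /= E; subst; congr exist; apply: proof_irrelevance. Qed.

Lemma cls_eq t u : rveq t u -> cls t = cls u.
Proof. by move=> tu; apply: WV_eq; apply: rveq_ext. Qed.

Lemma mem_cls_self t : mem_cls (cls t) t.
Proof. exact: rveq_refl. Qed.

Lemma mem_clsE p t : mem_cls p t -> p = cls t.
Proof.
by case: p => P [t0 E]; rewrite /mem_cls /= => Pt; apply: WV_eq; rewrite /= E;
  apply: rveq_ext; rewrite -E.
Qed.

Lemma cls_inj t u : cls t = cls u -> rveq t u.
Proof. by move=> E; have := mem_cls_self u; rewrite -E. Qed.

Lemma exists_mem_cls (p : WV) : exists t, mem_cls p t.
Proof. by case: p => P [t E]; exists t; rewrite /mem_cls /= E; apply: rveq_refl. Qed.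

Lemma wedge_cls r t u : redge r t u -> wedge r (cls t) (cls u).
Proof. by move=> tu; exists t, u; split; [|split]; rewrite //; apply: mem_cls_self. Qed.

Lemma wedge_clsP r t q : wedge r (cls t) q ->
  exists t' u, [/\ rveq t t', q = cls u & redge r t' u].
Proof. by case=> t' [u [tt' [uq e]]]; exists t', u; split=> //; apply: mem_clsE. Qed.

Lemma filter_of_wedge r u p q : filter_of r u p -> wedge r p q -> filter_of r u q.
Proof. by move=> up pq; apply: rt_trans up (rt_step _ _ _ _ pq). Qed.

Fixpoint word_height (w : word) : Z :=
  if w is l :: w' then ((if l.2 then 1 else -1) + word_height w')%Z else 0%Z.

Lemma word_height_cat w w' : word_height (w ++ w') = (word_height w + word_height w')%Z.
Proof. by elim: w => [|l w IH] /=; lia. Qed.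

Lemma geq_word_height w w' : Defs.geq w w' -> word_height w = word_height w'.
Proof.
elim=> [x y [p q u v [[e [|]]|s _]]|x|x y _ IH|x y z _ IH1 _ IH2].
all: rewrite ?word_height_cat /=; lia.
Qed.

Definition height (t : rv) : Z :=
  (match t with
  | RV w => 8 * word_height w | RM w _ => 8 * word_height w + 1
  | RC w _ => 8 * word_height w + 2 | RT w _ k => 8 * word_height w + 2 + Z.of_nat k
  end)%Z.

Lemma height_rveq t u : rveq t u -> height t = height u.
Proof. by case=> [w w' h|w w' e h|w w' s h|w w' e k h]; rewrite /= (geq_word_height h). Qed.

Lemma height_redge r t u : redge r t u -> (height t < height u)%Z.
Proof. by case=> *; rewrite /height ?word_height_cat; cbn [word_height fst snd]; lia. Qed.

Lemma wle_height r p q : wle r p q ->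
  p = q \/ forall t u, mem_cls p t -> mem_cls q u -> (height t < height u)%Z.
Proof.
elim=> [x y [t [u [xt [yu tu]]]]|x|x y z _ [<-|xy] _ [<-|yz]];
  [right|left|left|right|right|right] => //.
- move=> t' u' /mem_clsE xt' /mem_clsE yu'.
  rewrite (mem_clsE xt) in xt'; rewrite (mem_clsE yu) in yu'.
  rewrite -(height_rveq (cls_inj xt')) -(height_rveq (cls_inj yu')).
  exact: height_redge tu.
- move=> t u xt zu; have [m ym] := exists_mem_cls y.
  by move: (xy _ _ xt ym) (yz _ _ ym zu); lia.
Qed.

Lemma wle_antisym r p q : wle r p q -> wle r q p -> p = q.
Proof.
move=> /wle_height[//|pq] /wle_height[//|qp].
have [t pt] := exists_mem_cls p; have [u qu] := exists_mem_cls q.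
by move: (pq _ _ pt qu) (qp _ _ qu pt); lia.
Qed.

Section Tips.
Variable r : col -> nat.

Definition sink (q : WV) := forall q', ~ wedge r q q'.
Definition unique_succ (q q' : WV) := wedge r q q' /\ forall q'', wedge r q q'' -> q'' = q'.

Fixpoint tip_chain (k : nat) (q : WV) : Prop :=
  if k is k'.+1 then exists q', unique_succ q q' /\ tip_chain k' q' else sink q.

Definition has_tip (p : WV) (k : nat) := exists q, wedge r p q /\ tip_chain k q.

Lemma branching_not_tip_chain q q1 q2 k :
  wedge r q q1 -> wedge r q q2 -> q1 <> q2 -> ~ tip_chain k q.
Proof.
move=> qq1 qq2 q12; case: k => [|k] /=; first by move/(_ _ qq1).
by case=> q' [[_ uniq_q'] _]; apply: q12; rewrite (uniq_q' _ qq1) (uniq_q' _ qq2).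
Qed.

Lemma RV_not_tip_chain w k : ~ tip_chain k (cls (RV w)).
Proof.
apply: (branching_not_tip_chain (wedge_cls (e_vm r w ca)) (wedge_cls (e_vm r w cb))).
by move/cls_inj => h; inversion h.
Qed.

Lemma RC_not_tip_chain w s k : List.In s wise_squares -> ~ tip_chain k (cls (RC w s)).
Proof.
move=> s_in.
apply: (branching_not_tip_chain (wedge_cls (e_cr r w s_in)) (wedge_cls (e_ct r w s_in))).
move/cls_inj => h; inversion h; subst.
by move: s_in H3; rewrite /wise_squares /=; intuition subst.
Qed.

Lemma wedge_RT w e m q : wedge r (cls (RT w e m)) q -> q = cls (RT w e m.+1) /\ m < r e.
Proof.
case/wedge_clsP=> t' [u [tt' -> tu]]; inversion tt'; subst; inversion tu; subst.
by split=> //; apply: cls_eq; constructor; apply: geq_sym.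
Qed.

Lemma tip_chain_RT w e k m : 0 < m <= r e -> tip_chain k (cls (RT w e m)) <-> k = r e - m.
Proof.
elim: k m => [|k IH] m /andP[m_gt0 m_le] /=; split.
- case: (ltnP m (r e)) => [m_lt /(_ _ (wedge_cls (e_tt w m_gt0 m_lt)))//|]; lia.
- by move=> em q /wedge_RT[_]; lia.
- by case=> q' [[/wedge_RT[-> m_lt] _] /IH]; lia.
- move=> ek; have m_lt : m < r e by lia.
  exists (cls (RT w e m.+1)); split; last by apply/IH; lia.
  by split=> [|q'' /wedge_RT[]//]; apply: wedge_cls (e_tt w m_gt0 m_lt).
Qed.

(* Tips are the only unbranched chains ending at a sink, so the length of
   the tip at a midpoint, which determines its colour, is an order invariant. *)
Lemma has_tip_RM w e k : 0 < r e -> has_tip (cls (RM w e)) k <-> k = r e - 1.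
Proof.
move=> re_gt0; split.
- case=> q [/wedge_clsP[t' [u [tt' -> tu]]] chain]; inversion tt'; subst.
  inversion tu; subst.
  + by case: (RV_not_tip_chain chain).
  + by case: (RC_not_tip_chain H3 chain).
  + by case: (RC_not_tip_chain H3 chain).
  + by move: chain; rewrite tip_chain_RT // re_gt0.
- move=> ->; exists (cls (RT w e 1)); split; first exact: wedge_cls (e_mt w re_gt0).
  by rewrite tip_chain_RT // re_gt0.
Qed.

End Tips.

Record future_iso (r : col -> nat) (u u' : WV) (f : WV -> WV) : Prop := FutureIso {
  iso_filter z : filter_of r u z -> filter_of r u' (f z);
  iso_inj z1 z2 : filter_of r u z1 -> filter_of r u z2 -> f z1 = f z2 -> z1 = z2;
  iso_surj z' : filter_of r u' z' -> exists2 z, filter_of r u z & f z = z';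
  iso_wedge z1 z2 : filter_of r u z1 -> filter_of r u z2 ->
    wedge r z1 z2 <-> wedge r (f z1) (f z2) }.

Section FutureIso.
Variables (r : col -> nat) (u u' : WV) (f : WV -> WV).
Hypothesis iso : future_iso r u u' f.

Lemma iso_succ z q' : filter_of r u z -> wedge r (f z) q' ->
  exists2 q, filter_of r u q & wedge r z q /\ f q = q'.
Proof.
move=> uz fzq'; have [q uq fq] := iso_surj iso (filter_of_wedge (iso_filter iso uz) fzq').
by subst; exists q => //; split=> //; apply/(iso_wedge iso uz uq).
Qed.

Lemma tip_chain_iso k q : filter_of r u q -> tip_chain r k (f q) <-> tip_chain r k q.
Proof.
elim: k q => [|k IH] q uq /=; split.
- move=> sink_fq q' qq'; apply: (sink_fq (f q')).
  exact/(iso_wedge iso uq (filter_of_wedge uq qq')).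
- by move=> sink_q q' /(iso_succ uq) [q'' _ [/sink_q]].
- case=> _ [[/(iso_succ uq) [q' uq' [qq' <-]] uniq_fq] /(IH _ uq') chain].
  exists q'; split=> //; split=> // q'' qq''; have uq'' := filter_of_wedge uq qq''.
  by apply: (iso_inj iso) => //; apply: uniq_fq; apply/(iso_wedge iso uq uq'').
- case=> q' [[qq' uniq_q] chain]; have uq' := filter_of_wedge uq qq'.
  exists (f q'); split; last exact/IH.
  split=> [|_ /(iso_succ uq) [q'' _ [/uniq_q -> <-]]] //.
  exact/(iso_wedge iso uq uq').
Qed.

Lemma has_tip_iso z k : filter_of r u z -> has_tip r (f z) k <-> has_tip r z k.
Proof.
move=> uz; split.
- by case=> _ [/(iso_succ uz) [q uq [zq <-]] /(tip_chain_iso _ uq) chain]; exists q.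
- case=> q [zq chain]; have uq := filter_of_wedge uz zq.
  by exists (f q); split; [apply/(iso_wedge iso uz uq) | apply/tip_chain_iso].
Qed.

Lemma wle_iso z1 z2 : wle r z1 z2 -> filter_of r u z1 -> wle r (f z1) (f z2).
Proof.
move/clos_rt_rt1n_iff; elim=> [x|x y z xy _ IH] ux; first exact: rt_refl.
have uy := filter_of_wedge ux xy.
by apply: rt_trans (IH uy); apply: rt_step; apply/(iso_wedge iso ux uy).
Qed.

Lemma iso_root : f u = u'.
Proof.
have [z uz fz] := iso_surj iso (rt_refl _ _ u').
apply: wle_antisym; first by rewrite -fz; apply: wle_iso uz (rt_refl _ _ u).
exact: (iso_filter iso (rt_refl _ _ u)).
Qed.

End FutureIso.

(* [row_vertex g n i j] is reached from [g] by i edges of colour c followed by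
   the first j letters of row i; the squares between two consecutive rows
   make row i.+1 the image of row i under the transducer started at c. *)
Definition row (n i : nat) : seq bool := iter i (trans_out Vc) (nseq n false).
Definition row_vertex (g : word) (n i j : nat) : word :=
  g ++ map fwd (nseq i cc ++ map hcol (take j (row n i))).
Definition row_state (n i j : nat) : vcol := trans_state Vc (take j (row n i)).
Definition row_colour (n i j : nat) : col := hcol (nth false (row n i) j).

Lemma size_row n i : size (row n i) = n.
Proof. by elim: i => [|i IH]; rewrite /row ?size_nseq //= size_trans_out. Qed.

Lemma row_vertex_succ g n i j : j < n ->
  row_vertex g n i j.+1 = row_vertex g n i j ++ [:: fwd (row_colour n i j)].
Proof.
move=> j_lt; rewrite /row_vertex (take_nth false) ?size_row //.
by rewrite map_rcons -rcons_cat map_rcons -rcons_cat -cats1.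
Qed.

Lemma row_vertexE g n i j :
  row_vertex g n i j = row_vertex g n i 0 ++ map fwd (map hcol (take j (row n i))).
Proof. by rewrite /row_vertex take0 cats0 map_cat catA. Qed.

Lemma row_colour_succ n i j : j < n ->
  hcol (wise_step (row_state n i j) (nth false (row n i) j)).1 = row_colour n i.+1 j.
Proof. by move=> j_lt; rewrite /row_colour /= (nth_trans_out Vc _).1 ?size_row. Qed.

Lemma row_vertex_up g n i j : j <= n ->
  Defs.geq (row_vertex g n i j ++ [:: fwd (vcol_col (row_state n i j))])
           (row_vertex g n i.+1 j).
Proof.
elim: j => [|j IH] j_le.
  rewrite /row_vertex /row_state !take0 /= !cats0 -catA map_nseq.
  by rewrite -[[:: fwd cc]]/(nseq 1 _) -nseqD addn1; apply: geq_refl.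
have j_lt : j < size (row n i) by rewrite size_row.
have [_ state_succ] := nth_trans_out Vc j_lt.
rewrite (row_vertex_succ g i j_le) (row_vertex_succ g i.+1 j_le) /row_state state_succ.
rewrite -(row_colour_succ i j_le) -/(row_state n i j) /row_colour.
set l := nth false (row n i) j; set s := row_state n i j.
apply: geq_trans (geq_catr _ (IH (ltnW j_le))); rewrite -!(catA (row_vertex g n i j)).
exact: geq_square (wise_step_square s l).
Qed.

Lemma wle_RV_fwd r w es : wle r (cls (RV w)) (cls (RV (w ++ map fwd es))).
Proof.
elim: es w => [|e es IH] w; first by rewrite cats0; apply: rt_refl.
rewrite /= -cat1s catA; apply: rt_trans (IH _).
apply: rt_trans (rt_step _ _ _ _ (wedge_cls (e_vm r w e))) _.
exact: rt_step (wedge_cls (e_mv r w e)).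
Qed.

Section RowLabels.
Variables (r : col -> nat) (g : word) (L : Type) (lab : WV -> WV -> L).
Hypothesis lab_nice : nice_labeling r (cls (RV g)) lab.

Lemma label_bottom_top_fst w sq : List.In sq wise_squares ->
  filter_of r (cls (RV g)) (cls (RV w)) ->
  lab (cls (RV w)) (cls (RM w (sbot sq))) =
  lab (cls (RV (w ++ [:: fwd (sleft sq)]))) (cls (RM (w ++ [:: fwd (sleft sq)]) (stop sq))).
Proof.
move=> sq_in gw; have gw' := filter_of_wedge gw (wedge_cls (e_vm r w (sleft sq))).
have [-> _] := proj1 lab_nice _ _ _ _ (q_bl w sq_in) gw.
by have [-> _] := proj1 lab_nice _ _ _ _ (q_tl w sq_in) gw'.
Qed.

Lemma label_bottom_top_snd w sq : List.In sq wise_squares ->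
  filter_of r (cls (RV g)) (cls (RV w)) ->
  lab (cls (RM w (sbot sq))) (cls (RV (w ++ [:: fwd (sbot sq)]))) =
  lab (cls (RM (w ++ [:: fwd (sleft sq)]) (stop sq)))
      (cls (RV ((w ++ [:: fwd (sleft sq)]) ++ [:: fwd (stop sq)]))).
Proof.
move=> sq_in gw; have gw' := filter_of_wedge gw (wedge_cls (e_vm r w (sbot sq))).
have gw'' := filter_of_wedge gw' (wedge_cls (e_bc r w sq_in)).
have [-> _] := proj1 lab_nice _ _ _ _ (q_br w sq_in) gw'.
have [-> _] := proj1 lab_nice _ _ _ _ (q_tr w sq_in) gw''.
by rewrite -catA; congr (lab _ _); apply: cls_eq; constructor; apply: geq_square.
Qed.

Variable n : nat.

Definition row_label_in i j :=
  lab (cls (RV (row_vertex g n i j))) (cls (RM (row_vertex g n i j) (row_colour n i j))).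
Definition row_label_out i j :=
  lab (cls (RM (row_vertex g n i j) (row_colour n i j)))
      (cls (RV (row_vertex g n i j ++ [:: fwd (row_colour n i j)]))).

Lemma filter_row_vertex i j : filter_of r (cls (RV g)) (cls (RV (row_vertex g n i j))).
Proof. exact: wle_RV_fwd. Qed.

Lemma row_label_in_succ i j : j < n -> row_label_in i.+1 j = row_label_in i j.
Proof.
move=> j_lt; set l := nth false (row n i) j.
have := label_bottom_top_fst (wise_step_square (row_state n i j) l) (filter_row_vertex i j).
cbn [sbot sleft stop]; rewrite (row_colour_succ i j_lt) /row_label_in => ->.
have up := row_vertex_up g i (ltnW j_lt).
by rewrite (cls_eq (rveqV up)) (cls_eq (rveqM _ up)).
Qed.

Lemma row_label_out_succ i j : j < n -> row_label_out i.+1 j = row_label_out i j.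
Proof.
move=> j_lt; set l := nth false (row n i) j.
have := label_bottom_top_snd (wise_step_square (row_state n i j) l) (filter_row_vertex i j).
cbn [sbot sleft stop]; rewrite (row_colour_succ i j_lt) /row_label_out => ->.
have up := row_vertex_up g i (ltnW j_lt).
by rewrite (cls_eq (rveqV (geq_catr _ up))) (cls_eq (rveqM _ up)).
Qed.

Lemma row_labels_0 i j : j < n ->
  row_label_in i j = row_label_in 0 j /\ row_label_out i j = row_label_out 0 j.
Proof.
by move=> j_lt; elim: i => [|i [IHin IHout]] //; rewrite row_label_in_succ ?row_label_out_succ.
Qed.

End RowLabels.

Definition preserves_labels r (L : Type) (lab : WV -> WV -> L) (u : WV) (f : WV -> WV) :=
  forall z1 z2, filter_of r u z1 -> filter_of r u z2 -> wedge r z1 z2 ->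
    lab (f z1) (f z2) = lab z1 z2.

Lemma labeled_future_isoP r (L : Type) (lab : WV -> WV -> L) u u' :
  labeled_future_iso r lab u u' ->
  exists f, future_iso r u u' f /\ preserves_labels r lab u f.
Proof. by case=> f [? [? [? [? ?]]]]; exists f. Qed.

Section TwoFutures.
Variables (r : col -> nat) (v : WV) (L : Type) (lab : WV -> WV -> L).
Variables (u1 u2 u' : WV) (f1 f2 : WV -> WV).
Hypothesis lab_nice : nice_labeling r v lab.
Hypothesis v_u' : filter_of r v u'.
Hypotheses (iso1 : future_iso r u1 u' f1) (lab1 : preserves_labels r lab u1 f1).
Hypotheses (iso2 : future_iso r u2 u' f2) (lab2 : preserves_labels r lab u2 f2).

Lemma iso_succ_eq x y x' y' : filter_of r u1 x -> filter_of r u2 y -> f1 x = f2 y ->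
  wedge r x x' -> wedge r y y' -> lab x x' = lab y y' -> f1 x' = f2 y'.
Proof.
move=> u1x u2y fxy xx' yy' lab_xy; apply: NNPP => neq.
have u1x' := filter_of_wedge u1x xx'; have u2y' := filter_of_wedge u2y yy'.
have v_fx : filter_of r v (f1 x) := rt_trans _ _ _ _ _ v_u' (iso_filter iso1 u1x).
apply: (proj2 lab_nice _ _ _ v_fx _ _ neq).
- exact/(iso_wedge iso1 u1x u1x').
- by rewrite fxy; apply/(iso_wedge iso2 u2y u2y').
- by rewrite (lab1 u1x u1x' xx') fxy (lab2 u2y u2y' yy').
Qed.

Lemma iso_RM_colour w1 w2 e1 e2 : (forall e, 0 < r e) -> injective r ->
  filter_of r u1 (cls (RM w1 e1)) -> filter_of r u2 (cls (RM w2 e2)) ->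
  f1 (cls (RM w1 e1)) = f2 (cls (RM w2 e2)) -> e1 = e2.
Proof.
move=> r_pos r_inj u1m u2m fm; apply: r_inj.
have : has_tip r (f1 (cls (RM w1 e1))) (r e1 - 1) by rewrite (has_tip_iso iso1 _ u1m) has_tip_RM.
rewrite fm (has_tip_iso iso2 _ u2m) has_tip_RM //.
by move: (r_pos e1) (r_pos e2); lia.
Qed.

End TwoFutures.

Lemma hcol_inj : injective hcol. Proof. by case; case. Qed.

Section RowFutures.
Variables (r : col -> nat) (g : word) (L : Type) (lab : WV -> WV -> L).
Hypotheses (r_pos : forall e, 0 < r e) (r_inj : injective r).
Hypothesis lab_nice : nice_labeling r (cls (RV g)) lab.
Variables (n i k : nat) (u' : WV) (f1 f2 : WV -> WV).
Hypothesis g_u' : filter_of r (cls (RV g)) u'.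
Let V i' j := cls (RV (row_vertex g n i' j)).
Let M i' j := cls (RM (row_vertex g n i' j) (row_colour n i' j)).
Hypotheses (iso1 : future_iso r (V i 0) u' f1) (lab1 : preserves_labels r lab (V i 0) f1).
Hypotheses (iso2 : future_iso r (V k 0) u' f2) (lab2 : preserves_labels r lab (V k 0) f2).

Lemma filter_row_start i' j : filter_of r (V i' 0) (V i' j).
Proof. by rewrite /V (row_vertexE g n i' j); apply: wle_RV_fwd. Qed.

Lemma row_iso_step j : j < n -> f1 (V i j) = f2 (V k j) ->
  row_colour n i j = row_colour n k j /\ f1 (V i j.+1) = f2 (V k j.+1).
Proof.
move=> j_lt fV.
have [in_i out_i] := row_labels_0 lab_nice i j_lt.
have [in_k out_k] := row_labels_0 lab_nice k j_lt.
have Vi := filter_row_start i j; have Vk := filter_row_start k j.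
have Mi : wedge r (V i j) (M i j) := wedge_cls (e_vm r _ _).
have Mk : wedge r (V k j) (M k j) := wedge_cls (e_vm r _ _).
have fM : f1 (M i j) = f2 (M k j).
  apply: (iso_succ_eq lab_nice g_u' iso1 lab1 iso2 lab2 Vi Vk fV Mi Mk).
  by rewrite -/(row_label_in g lab n i j) -/(row_label_in g lab n k j) in_i in_k.
have Mi' := filter_of_wedge Vi Mi; have Mk' := filter_of_wedge Vk Mk.
split; first exact: (iso_RM_colour iso1 iso2 r_pos r_inj Mi' Mk' fM).
rewrite /V !row_vertex_succ //.
apply: (iso_succ_eq lab_nice g_u' iso1 lab1 iso2 lab2 Mi' Mk' fM)
  (wedge_cls (e_mv r _ _)) (wedge_cls (e_mv r _ _)) _.
by rewrite -/(row_label_out g lab n i j) -/(row_label_out g lab n k j) out_i out_k.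
Qed.

Lemma row_iso_eq : row n i = row n k.
Proof.
suff /(_ n (leqnn n))[_] : forall j, j <= n ->
    f1 (V i j) = f2 (V k j) /\ take j (row n i) = take j (row n k).
  by rewrite !take_oversize ?size_row.
elim=> [|j IH] j_le; first by rewrite !take0 (iso_root iso1) (iso_root iso2).
have [fV take_eq] := IH (ltnW j_le).
have [/hcol_inj nth_eq fV'] := row_iso_step j_le fV.
by split=> //; rewrite !(take_nth false) ?size_row // take_eq nth_eq.
Qed.

End RowFutures.

Lemma row_inj n i k : i < 2 ^ n -> k < 2 ^ n -> row n i = row n k -> i = k.
Proof.
wlog ik : i k / i <= k => [hwlog|].
  by case: (leqP i k) => [|/ltnW] ik ? ? E; [|symmetry]; apply: hwlog.
move=> _ k_lt E; apply/eqP; rewrite eqn_leq ik leqNgt; apply/negP => ik'.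
have := @iter_cascade_neq n [:: Vc] (row n i) (k - i) erefl (size_row n i).
change (cascade [:: Vc]) with (trans_out Vc).
rewrite /row -iterD subnK // -/(row n k) -E eqxx.
have k_i : 0 < k - i < 2 ^ n by lia.
by move/(_ k_i).
Qed.

Lemma pigeonhole_rel (A : Type) (P : nat -> A -> Prop) (reps : list A) (I : seq nat) :
  uniq I -> (forall i, i \in I -> exists2 a, List.In a reps & P i a) ->
  (forall a i k, List.In a reps -> i \in I -> k \in I -> P i a -> P k a -> i = k) ->
  size I <= length reps.
Proof.
elim: reps I => [|a reps IH] I uniq_I cover functional.
  by case: I uniq_I cover functional => [|i I] // _ /(_ i (mem_head _ _))[].
have functional' b i k : List.In b reps -> i \in I -> k \in I -> P i b -> P k b -> i = k.
  by move=> b_in; apply: functional; right.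
case: (classic (exists2 i, i \in I & P i a)) => [[i0 i0_in Pi0]|no_i].
  have : size (rem i0 I) <= length reps.
    apply: IH => [|i|b i k b_in]; rewrite ?rem_uniq ?(mem_rem_uniq _ uniq_I) //.
      case/andP=> ne_i0 i_in; have [b [<-|b_in] Pib] := cover i i_in; last by exists b.
      by move: ne_i0; rewrite (functional _ _ _ (or_introl erefl) i_in i0_in Pib Pi0) eqxx.
    by rewrite !inE => /andP[_ i_in] /andP[_ k_in]; apply: functional'.
  by rewrite size_rem //=; lia.
apply/leqW/IH => // i i_in; have [b [<-|b_in] Pib] := cover i i_in.
  by case: no_i; exists i.
by exists b.
Qed.

Theorem theorem6p5 (r : col -> nat) (r_inj : injective r)
    (r_range : forall e, 1 <= r e <= 5)
    (g : word) (L : finType) (lab : WV -> WV -> L) :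
  ~ regular_nice_labeling r (cls (RV g)) lab.
Proof.
case=> [lab_nice [reps [reps_in cover]]].
have r_pos e : 0 < r e by case/andP: (r_range e).
set n := length reps.
suff : 2 ^ n <= n by rewrite leqNgt ltn_expl.
rewrite -[2 ^ n](size_iota 0).
apply: (@pigeonhole_rel _ (fun i => labeled_future_iso r lab (cls (RV (row_vertex g n i 0)))))
  => [|i _|u' i k u'_in]; first exact: iota_uniq.
  by apply: cover; apply: wle_RV_fwd.
rewrite !mem_iota !add0n => /andP[_ i_lt] /andP[_ k_lt].
move=> /labeled_future_isoP[f1 [iso1 lab1]] /labeled_future_isoP[f2 [iso2 lab2]].
apply: (row_inj i_lt k_lt).
exact: (row_iso_eq r_pos r_inj lab_nice (reps_in _ u'_in) iso1 lab1 iso2 lab2).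
Qed.
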